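(* Let $n\ge 3$, $u>0$, and let $S=[A_0,\dots,A_n]$ be an $n$-simplex with $\|A_i-A_0\|^2=v_i$ for $1\le i\le n$ and $\|A_i-A_j\|^2=u$ for $1\le i<j\le n$. For $0\le j\le n$ let $S_j$ be the facet of $S$ obtained by removing the vertex $A_j$, and let $\mathcal{C}_j,\mathcal{D}_j$ be the Cayley–Menger and inner Cayley–Menger determinants of $S_j$. Put $\alpha=u+v_1+\cdots+v_n$ and $\beta=u^2+v_1^2+\cdots+v_n^2$. Then for $1\le j\le n$: $$\mathcal{C}_0=(-1)^n n u^{n-1},\qquad \mathcal{C}_j=(-u)^{n-3}\big[-\alpha^2+(n-1)\beta-nv_j^2+2\alpha v_j\big],$$ $$\mathcal{D}_0=(-1)^{n+1}u^n(n-1),$$ $$\mathcal{D}_j=(-u)^{n-2}\big[(n-2)\beta-\alpha^2+2\alpha u-(n-1)u^2-(n-1)v_j^2+2\alpha v_j-2uv_j\big].$$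
   Context: For an $m$-simplex $T=[B_0,\dots,B_m]$ with $b_{i,j}=\|B_i-B_j\|^2$, the Cayley–Menger determinant is the $(m+2)\times(m+2)$ determinant with rows/columns indexed by $-1,0,\dots,m$, entries $0$ on the diagonal, $1$ in the rest of row $-1$ and column $-1$, and $b_{i,j}$ otherwise; the inner Cayley–Menger determinant is $\det(b_{i,j})_{0\le i,j\le m}$. *)

From mathcomp Require Import all_boot all_order all_algebra.
Set Implicit Arguments. Unset Strict Implicit. Unset Printing Implicit Defensive.
Import Order.TTheory GRing.Theory Num.Theory.
Local Open Scope ring_scope.

Definition sqdist (R : realFieldType) (d : nat) (x y : 'rV[R]_d) : R :=
  \sum_(k < d) (x 0 k - y 0 k) ^+ 2.

Definition is_simplex (R : realFieldType) (d n : nat) (A : 'I_n.+1 -> 'rV[R]_d) : bool :=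
  row_free (\matrix_(i < n, k < d) (A (lift ord0 i) 0 k - A ord0 0 k)).

Definition inner_cm_mx (R : realFieldType) (d p : nat) (B : 'I_p -> 'rV[R]_d) : 'M[R]_p :=
  \matrix_(i < p, j < p) sqdist (B i) (B j).

(* Cayley-Menger matrix: row/column -1 is the first block row/column. *)
Definition cm_mx (R : realFieldType) (d p : nat) (B : 'I_p -> 'rV[R]_d) : 'M[R]_(1 + p) :=
  block_mx (0 : 'M[R]_1) (const_mx 1 : 'M[R]_(1, p))
           (const_mx 1 : 'M[R]_(p, 1)) (inner_cm_mx B).

Definition CM (R : realFieldType) (d p : nat) (B : 'I_p -> 'rV[R]_d) : R := \det (cm_mx B).
Definition innerCM (R : realFieldType) (d p : nat) (B : 'I_p -> 'rV[R]_d) : R :=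
  \det (inner_cm_mx B).

Definition facet (R : realFieldType) (d n : nat) (A : 'I_n.+1 -> 'rV[R]_d) (j : 'I_n.+1)
  : 'I_n -> 'rV[R]_d := fun k => A (lift j k).

From mathcomp Require Import all_boot all_order all_algebra.
From mathcomp Require Import ring.
Set Implicit Arguments.
Unset Strict Implicit.
Unset Printing Implicit Defensive.
Import Order.TTheory GRing.Theory Num.Theory.
Local Open Scope ring_scope.

(* The squared distances within every facet have the same shape: one apex at squared
   distances w_k from base points that are pairwise at squared distance u (for S_0 the
   apex is A_1 and w = u).  Such a matrix, and its Cayley-Menger bordering, is
   -u I plus a matrix U V of rank at most 3, resp. 4, so by the Weinstein-Aronszajn
   identity det (c I_p + U V) c^k = c^p det (c I_k + V U) its determinant is a power of
   -u times an explicit 3x3, resp. 4x4, determinant in u, p, sum w_k and sum w_k^2. *)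

Lemma det_scalar_add_mulmx (F : fieldType) p k (c : F)
    (U : 'M[F]_(p, k)) (V : 'M[F]_(k, p)) :
  c != 0 -> \det (c%:M + U *m V) * c ^+ k = c ^+ p * \det (c%:M + V *m U).
Proof.
(* Both sides are the determinant of [[c, -U], [V, 1]], factored block-triangularly. *)
move=> c0; pose Q := block_mx (c%:M : 'M_p) (- U) V (1%:M : 'M_k).
have QE1 : Q = block_mx 1%:M (- U) 0 1%:M *m block_mx (c%:M + U *m V) 0 V 1%:M.
  rewrite mulmx_block !(mul1mx, mul0mx, mulmx0, mulmx1, addr0, add0r, mulNmx).
  by rewrite addrK.
have QE2 : Q = block_mx c%:M 0 V 1%:M *m
               block_mx 1%:M (- (c^-1 *: U)) 0 (1%:M + c^-1 *: (V *m U)).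
  rewrite mulmx_block !(mul1mx, mul0mx, mulmx0, mulmx1, addr0, add0r, mulNmx).
  rewrite mul_scalar_mx scalerN scalerA mulfV // scale1r mulmxN -scalemxAr.
  by rewrite addrCA addNr addr0.
have detQ1 : \det Q = \det (c%:M + U *m V).
  by rewrite QE1 det_mulmx det_ublock det_lblock !det1 !mul1r mulr1.
have detQ2 : \det Q = c ^+ p * \det (1%:M + c^-1 *: (V *m U)).
  by rewrite QE2 det_mulmx det_ublock det_lblock !det1 det_scalar !mulr1 mul1r.
rewrite -detQ1 detQ2 -mulrA; congr (_ * _).
by rewrite mulrC -detZ scalerDr scalerA mulfV // scale1r scalemx1.
Qed.

(* Matrices given by nat-indexed entries: after expanding a determinant, the indices are
   numerals and the entries compute.  [minor_nat] keeps the minors in the first-order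
   form [\matrix_(i, j) f i j] needed to expand them again by rewriting. *)
Definition scalar_add_mul_nat {R : ringType} (c : R) (p : nat) (f g : nat -> nat -> R)
    (i j : nat) : R :=
  c *+ (i == j) + \sum_(0 <= a < p) f i a * g a j.

Lemma scalar_add_mul_natE (R : ringType) p k (c : R) (f g : nat -> nat -> R) :
  \matrix_(i < p, j < p) scalar_add_mul_nat c k f g i j =
  c%:M + \matrix_(i < p, l < k) f i l *m \matrix_(l < k, j < p) g l j.
Proof.
apply/matrixP => i j; rewrite !mxE /scalar_add_mul_nat big_mkord; congr (_ + _).
by apply: eq_bigr => l _; rewrite !mxE.
Qed.

Lemma det_scalar_add_mul_nat (F : fieldType) p k (c : F) (f g : nat -> nat -> F) :
  c != 0 ->
  \det (\matrix_(i < p, j < p) scalar_add_mul_nat c k f g i j) * c ^+ k =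
  c ^+ p * \det (\matrix_(i < k, j < k) scalar_add_mul_nat c p g f i j).
Proof. by move=> c0; rewrite !scalar_add_mul_natE det_scalar_add_mulmx. Qed.

Definition minor_nat {R : Type} (f : nat -> nat -> R) (j0 i j : nat) : R :=
  f i.+1 (bump j0 j).

Lemma expand_det_mx_nat0 (R : comRingType) k (f : nat -> nat -> R) :
  \det (\matrix_(i < k.+1, j < k.+1) f i j) =
  \sum_(j < k.+1)
    f 0%N j * ((-1) ^+ j * \det (\matrix_(i < k, j' < k) minor_nat f j i j')).
Proof.
rewrite (expand_det_row _ ord0); apply: eq_bigr => j _; rewrite /cofactor mxE.
by congr (_ * (_ * \det _)); apply/matrixP => i j'; rewrite !mxE.
Qed.

Definition apex_sqdist {R : ringType} (u : R) (w : nat -> R) (a b : nat) : R :=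
  match a, b with
  | 0, 0 => 0
  | 0, b.+1 => w b.+1
  | a.+1, 0 => w a.+1
  | a.+1, b.+1 => if a == b then 0 else u
  end.

Lemma det_apex_sqdist (F : fieldType) p (u : F) (w : nat -> F) :
  u != 0 -> (2 <= p)%N ->
  \det (\matrix_(a < p, b < p) apex_sqdist u w a b) =
  (- u) ^+ (p - 2) *
    ((p%:R - 2) * \sum_(1 <= i < p) w i ^+ 2 - (\sum_(1 <= i < p) w i) ^+ 2).
Proof.
case: p => [|[|m]] // u0 _; rewrite !subSS subn0.
have Nu0 : - u != 0 by rewrite oppr_eq0.
under eq_bigr do rewrite expr2.
(* U = [e_0 | w | 1 - e_0] and V = [u e_0 + w; e_0; u (1 - e_0)], with w_0 = 0. *)
pose U a l : F := match a, l with 0, 0 => 1 | _.+1, 1 => w a | _.+1, 2 => 1 | _, _ => 0 end.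
pose V l b : F := match l, b with
  | 0, 0 => u | 0, _ => w b | 1, 0 => 1 | 2, _.+1 => u | _, _ => 0 end.
have -> : \matrix_(a < m.+2, b < m.+2) apex_sqdist u w a b =
          \matrix_(a < m.+2, b < m.+2) scalar_add_mul_nat (- u) 3 U V a b.
  apply/matrixP => a b; rewrite !mxE /scalar_add_mul_nat big_mkord.
  rewrite !big_ord_recl big_ord0 /=.
  case: a => [[|a] ?]; case: b => [[|b] ?] //=; rewrite ?eqSS;
    try case: eqP => _; rewrite ?mulr0n ?mulr1n; ring.
apply: (mulIf (expf_neq0 3 Nu0)); rewrite det_scalar_add_mul_nat //.
rewrite !(expand_det_mx_nat0, big_ord_recl, big_ord0, det_mx00) /minor_nat /= /bump /=.
rewrite ?(addn0, add0n, add1n).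
rewrite /scalar_add_mul_nat !(big_nat_recl m.+1 0) //= ?mulr0n ?mulr1n.
rewrite -?mulr_sumr -?mulr_suml ?sumr_const_nat ?subn0 !big_add1 /= ?mul0rn.
by rewrite -!natr1 !exprS; ring.
Qed.

Definition bordered {R : ringType} (E : nat -> nat -> R) (a b : nat) : R :=
  match a, b with
  | 0, 0 => 0
  | 0, _.+1 | _.+1, 0 => 1
  | a.+1, b.+1 => E a b
  end.

Lemma det_bordered_apex_sqdist (F : fieldType) p (u : F) (w : nat -> F) :
  u != 0 -> (3 <= p)%N ->
  \det (\matrix_(a < p.+1, b < p.+1) bordered (apex_sqdist u w) a b) =
  (- u) ^+ (p - 3) * ((p%:R - 1) * (u ^+ 2 + \sum_(1 <= i < p) w i ^+ 2)
                      - (u + \sum_(1 <= i < p) w i) ^+ 2).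
Proof.
case: p => [|[|[|m]]] // u0 _; rewrite !subSS subn0.
have Nu0 : - u != 0 by rewrite oppr_eq0.
under eq_bigr do rewrite expr2.
(* Index 0 is the border and index 1 the apex. *)
pose U a l : F := match a, l with
  | 0, 0 | 1, 1 | _.+2, 2 => 1 | a.+2, 3 => w a.+1 | _, _ => 0 end.
pose V l b : F := match l, b with
  | 0, 0 => u | 0, _ => 1
  | 1, 0 => 1 | 1, 1 => u | 1, b.+2 => w b.+1
  | 2, 0 => 1 | 2, 1 => 0 | 2, _ => u
  | 3, 1 => 1 | _, _ => 0 end.
have -> : \matrix_(a < m.+4, b < m.+4) bordered (apex_sqdist u w) a b =
          \matrix_(a < m.+4, b < m.+4) scalar_add_mul_nat (- u) 4 U V a b.
  apply/matrixP => a b; rewrite !mxE /scalar_add_mul_nat big_mkord.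
  rewrite !big_ord_recl big_ord0 /=.
  case: a => [[|[|a]] ?]; case: b => [[|[|b]] ?] //=; rewrite ?eqSS;
    try case: eqP => _; rewrite ?mulr0n ?mulr1n; ring.
apply: (mulIf (expf_neq0 4 Nu0)); rewrite det_scalar_add_mul_nat //.
rewrite !(expand_det_mx_nat0, big_ord_recl, big_ord0, det_mx00) /minor_nat /= /bump /=.
rewrite ?(addn0, add0n, add1n).
rewrite /scalar_add_mul_nat !(big_nat_recl m.+3 0) // !(big_nat_recl m.+2 0) //=.
rewrite ?mulr0n ?mulr1n.
rewrite -?mulr_sumr -?mulr_suml ?sumr_const_nat ?subn0 !big_add1 /= ?mul0rn.
by rewrite -!natr1 !exprS; ring.
Qed.

Lemma sqdistxx (R : realFieldType) d (x : 'rV[R]_d) : sqdist x x = 0.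
Proof. by rewrite /sqdist big1 // => k _; rewrite subrr expr0n. Qed.

Lemma sqdistC (R : realFieldType) d (x y : 'rV[R]_d) : sqdist x y = sqdist y x.
Proof. by rewrite /sqdist; apply: eq_bigr => k _; rewrite -sqrrN opprB. Qed.

Lemma cm_mx_bordered (R : realFieldType) d p (B : 'I_p -> 'rV[R]_d)
    (E : nat -> nat -> R) :
  inner_cm_mx B = \matrix_(a, b) E a b ->
  cm_mx B = \matrix_(a < p.+1, b < p.+1) bordered E a b.
Proof.
move=> BE; apply/matrixP => a b; rewrite [RHS]mxE.
have lshift0 : ord0 = lshift p (0 : 'I_1) by apply/val_inj.
have lift0_rshift (i : 'I_p) : lift ord0 i = rshift 1 i by apply/val_inj.
case: (unliftP ord0 a) => [a'|] ->; case: (unliftP ord0 b) => [b'|] ->.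
- by rewrite !lift0_rshift block_mxEdr BE mxE.
- by rewrite lift0_rshift lshift0 block_mxEdl mxE.
- by rewrite lift0_rshift lshift0 block_mxEur mxE.
- by rewrite lshift0 block_mxEul mxE.
Qed.

Lemma lift_eq_ord0 n (j : 'I_n.+1) (a : 'I_n) :
  j != ord0 -> (lift j a == ord0) = (a == 0 :> nat).
Proof.
rewrite -!val_eqE /= /bump => j_neq0; case: a => [[|a] ?] /=.
  by rewrite leqNgt lt0n j_neq0.
by rewrite addnS.
Qed.

Lemma apex_sqdist_const (R : ringType) (u : R) a b :
  apex_sqdist u (fun=> u) a b = if a == b then 0 else u.
Proof. by case: a b => [|a] [|b]. Qed.

Lemma big_nat1_bump (V : nmodType) n (f : nat -> V) (j : 'I_n.+1) : j != ord0 ->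
  \sum_(1 <= i < n.+1) f i = f j + \sum_(1 <= k < n) f (bump j k).
Proof.
case: j => [[|j] j_lt] // _; rewrite !big_add1 /= !big_mkord.
rewrite (bigD1_ord (Ordinal (j_lt : (j < n)%N))) //=; congr (_ + _).
by apply: eq_bigr => i _; rewrite /bump /= addnS.
Qed.

Section FacetsOfSimplexWithEquilateralBase.

Variables (R : realFieldType) (d n : nat) (u : R) (v : nat -> R).
Variable A : 'I_n.+1 -> 'rV[R]_d.
Hypothesis sqdist_apex : forall i : 'I_n.+1, i != ord0 -> sqdist (A i) (A ord0) = v i.
Hypothesis sqdist_base : forall i j : 'I_n.+1,
  i != ord0 -> j != ord0 -> i != j -> sqdist (A i) (A j) = u.

Lemma inner_cm_mx_facet0 :
  inner_cm_mx (facet A ord0) = \matrix_(a, b) apex_sqdist u (fun=> u) a b.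
Proof.
apply/matrixP => a b; rewrite !mxE /facet apex_sqdist_const.
case: eqP => [/val_inj -> | /eqP a_neq_b]; first exact: sqdistxx.
by apply: sqdist_base; rewrite ?lift_eqF // (inj_eq lift_inj).
Qed.

Lemma inner_cm_mx_facet (j : 'I_n.+1) : j != ord0 ->
  inner_cm_mx (facet A j) = \matrix_(a, b) apex_sqdist u (fun k => v (bump j k)) a b.
Proof.
move=> j_neq0; apply/matrixP => a b; rewrite !mxE /facet.
have liftE k := lift_eq_ord0 k j_neq0.
case: (eqVneq a b) => [<- | a_neq_b].
  by rewrite sqdistxx; case: a => [[|a] ?] /=; rewrite ?eqxx.
move: a_neq_b; rewrite -val_eqE.
case: a b => [[|a] a_lt] [[|b] b_lt] //= a_neq_b.
- have /eqP -> : lift j (Ordinal a_lt) == ord0 by rewrite liftE.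
  by rewrite sqdistC sqdist_apex // liftE.
- have /eqP -> : lift j (Ordinal b_lt) == ord0 by rewrite liftE.
  by rewrite sqdist_apex // liftE.
rewrite eqSS in a_neq_b; rewrite (negbTE a_neq_b).
apply: sqdist_base; rewrite ?liftE //.
by rewrite (inj_eq lift_inj) -val_eqE.
Qed.

Hypothesis u_neq0 : u != 0.
Hypothesis n_ge3 : (3 <= n)%N.

Let alpha := u + \sum_(1 <= i < n.+1) v i.
Let beta := u ^+ 2 + \sum_(1 <= i < n.+1) v i ^+ 2.

Lemma CM_facet0 : CM (facet A ord0) = (-1) ^+ n * n%:R * u ^+ (n - 1).
Proof.
rewrite /CM (cm_mx_bordered inner_cm_mx_facet0) det_bordered_apex_sqdist //.
have [m ->] : exists m, n = m.+3 by exists (n - 3)%N; rewrite -addn3 subnK.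
rewrite !sumr_const_nat !subSS !subn0 (exprNn u) !exprS; ring.
Qed.

Lemma innerCM_facet0 : innerCM (facet A ord0) = (-1) ^+ n.+1 * u ^+ n * (n%:R - 1).
Proof.
rewrite /innerCM inner_cm_mx_facet0 det_apex_sqdist // ?(ltnW n_ge3) //.
have [m ->] : exists m, n = m.+3 by exists (n - 3)%N; rewrite -addn3 subnK.
rewrite !sumr_const_nat !subSS !subn0 (exprNn u) !exprS; ring.
Qed.

Lemma CM_facet (j : 'I_n.+1) : j != ord0 ->
  CM (facet A j) = (- u) ^+ (n - 3) *
    (- alpha ^+ 2 + (n%:R - 1) * beta - n%:R * v j ^+ 2 + 2 * alpha * v j).
Proof.
move=> j_neq0; rewrite /CM (cm_mx_bordered (inner_cm_mx_facet j_neq0)).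
rewrite det_bordered_apex_sqdist // /alpha /beta (big_nat1_bump v j_neq0).
rewrite (big_nat1_bump (fun i => v i ^+ 2) j_neq0); ring.
Qed.

Lemma innerCM_facet (j : 'I_n.+1) : j != ord0 ->
  innerCM (facet A j) = (- u) ^+ (n - 2) *
    ((n%:R - 2) * beta - alpha ^+ 2 + 2 * alpha * u - (n%:R - 1) * u ^+ 2
     - (n%:R - 1) * v j ^+ 2 + 2 * alpha * v j - 2 * u * v j).
Proof.
move=> j_neq0; rewrite /innerCM (inner_cm_mx_facet j_neq0).
rewrite det_apex_sqdist ?(ltnW n_ge3) // /alpha /beta (big_nat1_bump v j_neq0).
rewrite (big_nat1_bump (fun i => v i ^+ 2) j_neq0); ring.
Qed.

End FacetsOfSimplexWithEquilateralBase.

Theorem theorem4p2 (R : realFieldType) (d n : nat) (u : R) (v : nat -> R)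
  (A : 'I_n.+1 -> 'rV[R]_d) :
  (3 <= n)%N -> 0 < u ->
  is_simplex A ->
  (forall i : 'I_n.+1, i != ord0 -> sqdist (A i) (A ord0) = v i) ->
  (forall i j : 'I_n.+1, i != ord0 -> j != ord0 -> i != j -> sqdist (A i) (A j) = u) ->
  let alpha := u + \sum_(1 <= i < n.+1) v i in
  let beta := u ^+ 2 + \sum_(1 <= i < n.+1) v i ^+ 2 in
  [/\ CM (facet A ord0) = (-1) ^+ n * n%:R * u ^+ (n - 1),
      innerCM (facet A ord0) = (-1) ^+ n.+1 * u ^+ n * (n%:R - 1),
      (forall j : 'I_n.+1, j != ord0 ->
         CM (facet A j) = (- u) ^+ (n - 3) *
           (- alpha ^+ 2 + (n%:R - 1) * beta - n%:R * v j ^+ 2 + 2 * alpha * v j)) &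
      (forall j : 'I_n.+1, j != ord0 ->
         innerCM (facet A j) = (- u) ^+ (n - 2) *
           ((n%:R - 2) * beta - alpha ^+ 2 + 2 * alpha * u - (n%:R - 1) * u ^+ 2
            - (n%:R - 1) * v j ^+ 2 + 2 * alpha * v j - 2 * u * v j))].
Proof.
move=> n_ge3 u_gt0 _ sqdist_apex sqdist_base alpha beta.
have u_neq0 := lt0r_neq0 u_gt0.
split; [exact: CM_facet0 | exact: innerCM_facet0 | exact: CM_facet | exact: innerCM_facet].
Qed.
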